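(* In the abruptly-changing incentivized bandit with reward drift where the principal uses Sliding Window UCB with window $\tau$ (as in the context), for all arms $a\in\{1,\dots,K\}$ and all $t\in\{1,\dots,T\}$, $$D_t(\tau,a)\le l\,N_t(a)\sqrt{\xi\log(\min(t,\tau))}.$$
   Context: Arms $\{1,\dots,K\}$, horizon $T$; true rewards $X_t(a)\in[0,1]$ independent with means $\mu_t(a)$. Protocol: the principal recommends $a_t$ by Sliding Window UCB; greedy choice $g_t=\arg\max_a\bar X_t(\tau,a)$; if $a_t\ne g_t$ the principal pays $\chi_t=\bar X_t(\tau,g_t)-\bar X_t(\tau,a_t)$ and the observed reward is $r_t=X_t(a_t)+\delta_t$, $\delta_t=f_t(\chi_t)$; otherwise $\delta_t=0$, $r_t=X_t(a_t)$. Each $f_t$ is non-decreasing, $f_t(0)=0$, Lipschitz with constant $l_t$; $l=\max_tl_t$. Sliding Window UCB (window $\tau$, constant $\xi$): $N_t(\tau,a)$ = number of pulls of $a$ in the last $\tau$ rounds, $\bar X_t(\tau,a)$ = average observed reward of $a$ over those rounds, $c_t(\tau,a)=\sqrt{\xi\log(\min(t,\tau))/N_t(\tau,a)}$; pull arm $t$ for $t\le K$, then $\arg\max_a\bar X_t(\tau,a)+c_t(\tau,a)$. $N_t(a)=\sum_{s\le t}\mathbf1(a_s=a)$, and $D_t(\tau,a)=\sum_{s\le t}\mathbf1(a_s=a)\delta_s$ is the total reward drift contributed by arm $a$ up to time $t$. *)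

From HB Require Import structures.
From mathcomp Require Import all_boot all_order all_algebra.
From mathcomp Require Import reals exp.
Set Implicit Arguments. Unset Strict Implicit. Unset Printing Implicit Defensive.
Import Order.TTheory GRing.Theory Num.Theory.
Local Open Scope ring_scope.

(* Rounds are numbered 1, 2, ...; arms 1..K are the ordinals 'I_K
   (arm number k+1 is the ordinal k).  [a s] is the arm recommended (and
   pulled) at round s, [r s] the observed reward at round s. *)

Definition Nwin (K tau : nat) (a : nat -> 'I_K) (t : nat) (i : 'I_K) : nat :=
  \sum_(maxn 1 (t - tau) <= s < t) (a s == i).

(* \bar X_t(tau, i): average observed reward of arm i over those rounds
   (MathComp convention x / 0 = 0 when the arm was not pulled). *)
Definition Xbar {R : realType} (K tau : nat) (a : nat -> 'I_K) (r : nat -> R)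
    (t : nat) (i : 'I_K) : R :=
  (\sum_(maxn 1 (t - tau) <= s < t | a s == i) r s) / (Nwin tau a t i)%:R.

Definition cbonus {R : realType} (K tau : nat) (xi : R) (a : nat -> 'I_K)
    (t : nat) (i : 'I_K) : R :=
  Num.sqrt (xi * ln (minn t tau)%:R / (Nwin tau a t i)%:R).

Definition Ntot (K : nat) (a : nat -> 'I_K) (t : nat) (i : 'I_K) : nat :=
  \sum_(1 <= s < t.+1) (a s == i).

Definition Drift {R : realType} (K : nat) (a : nat -> 'I_K) (delta : nat -> R)
    (t : nat) (i : 'I_K) : R :=
  \sum_(1 <= s < t.+1 | a s == i) delta s.

(* X t i: true reward of arm i at round t; f t: drift function;
   g t: greedy choice; delta t: drift; r t: observed reward.
   Ties in the argmax's are broken arbitrarily. *)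
Definition sw_ucb_run {R : realType} (K T tau : nat) (xi : R)
    (X : nat -> 'I_K -> R) (f : nat -> R -> R)
    (a g : nat -> 'I_K) (delta r : nat -> R) : Prop :=
  forall t, (1 <= t <= T)%N ->
    [/\ (t <= K)%N -> (val (a t) = t.-1)%N /\ delta t = 0,
        (K < t)%N ->
          [/\ forall i, Xbar tau a r t i + cbonus tau xi a t i
                        <= Xbar tau a r t (a t) + cbonus tau xi a t (a t),
              forall i, Xbar tau a r t i <= Xbar tau a r t (g t)
            & delta t = if a t != g t
                        then f t (Xbar tau a r t (g t) - Xbar tau a r t (a t))
                        else 0]
      & r t = X t (a t) + delta t].

Definition lmax {R : realType} (T : nat) (lt : nat -> R) : R :=
  \big[Num.max/0]_(1 <= s < T.+1) lt s.

(** Whenever the principal pays an incentive, the UCB choice of a_t over the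
    greedy arm g_t bounds that incentive chi_t = Xbar(g_t) - Xbar(a_t) by the
    bonus c_t(tau, a_t), which in turn is at most sqrt(xi log(min(t, tau)))
    since N_t(tau, a_t) >= 1 (or the bonus is 0).  The drift
    delta_t = f_t(chi_t) is then at most l_t chi_t <= l sqrt(xi log(min(t, tau)))
    by Lipschitz continuity and f_t(0) = 0; summing over the N_t(a) rounds in
    which arm a was pulled gives the bound. *)
From HB Require Import structures.
From mathcomp Require Import all_boot all_order all_algebra.
From mathcomp Require Import reals exp.
From mathcomp Require Import lra.
Set Implicit Arguments. Unset Strict Implicit. Unset Printing Implicit Defensive.
Import Order.TTheory GRing.Theory Num.Theory.
Local Open Scope ring_scope.

Lemma lmax_ge0 {R : realType} (T : nat) (lt : nat -> R) : 0 <= lmax T lt.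
Proof.
rewrite /lmax; elim: (index_iota _ _) => [|s r IH]; rewrite ?big_nil ?big_cons //.
by rewrite le_max IH orbT.
Qed.

Lemma le_lmax {R : realType} (T : nat) (lt : nat -> R) (s : nat) :
  (1 <= s <= T)%N -> lt s <= lmax T lt.
Proof.
move=> s_in; apply: (le_bigmax_seq _ s) => //.
by rewrite mem_index_iota ltnS.
Qed.

Lemma ler_sum_nat_count {R : numDomainType} (m n : nat) (P : pred nat)
    (F : nat -> R) (B : R) :
  (forall s, (m <= s < n)%N -> P s -> F s <= B) ->
  \sum_(m <= s < n | P s) F s <= (\sum_(m <= s < n) P s)%:R * B.
Proof.
move=> FB; rewrite natr_sum mulr_suml big_mkcond /=.
apply: ler_sum_nat => s s_in.
by case: ifP => Ps; rewrite ?mul1r ?mul0r // FB.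
Qed.

Lemma lipschitz0_le {R : realDomainType} (f : R -> R) (l x : R) :
  f 0 = 0 -> (forall x y, `|f x - f y| <= l * `|x - y|) -> 0 <= x ->
  f x <= l * x.
Proof.
move=> f0 f_lip x_ge0.
have := f_lip x 0; rewrite f0 !subr0 (ger0_norm x_ge0).
exact: le_trans (ler_norm _).
Qed.

Section LogWindow.
Variables (R : realType) (xi : R) (tau : nat).
Hypotheses (xi_ge0 : 0 <= xi) (tau_gt0 : (0 < tau)%N).

Lemma log_window_ge0 (t : nat) : (0 < t)%N -> 0 <= xi * ln (minn t tau)%:R :> R.
Proof.
by move=> t_gt0; rewrite mulr_ge0 // ln_ge0 // ler1n leq_min t_gt0.
Qed.

Lemma cbonus_le_log_window (K : nat) (a : nat -> 'I_K) (t : nat) (i : 'I_K) :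
  (0 < t)%N -> cbonus tau xi a t i <= Num.sqrt (xi * ln (minn t tau)%:R).
Proof.
move=> t_gt0; rewrite /cbonus ler_sqrt ?log_window_ge0 //.
case: (Nwin tau a t i) => [|n]; first by rewrite invr0 mulr0 log_window_ge0.
by rewrite ler_pdivrMr ?ltr0Sn // ler_peMr ?log_window_ge0 // ler1n.
Qed.

Lemma log_window_homo (s t : nat) : (0 < s)%N -> (s <= t)%N ->
  Num.sqrt (xi * ln (minn s tau)%:R) <= Num.sqrt (xi * ln (minn t tau)%:R).
Proof.
move=> s_gt0 le_st; have t_gt0 := leq_trans s_gt0 le_st.
rewrite ler_sqrt ?log_window_ge0 // ler_wpM2l //.
rewrite ler_ln ?posrE ?ltr0n ?leq_min ?s_gt0 ?t_gt0 ?tau_gt0 // ler_nat.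
by rewrite leq_min (leq_trans (geq_minl _ _) le_st) geq_minr.
Qed.

End LogWindow.

Section IncentivizedRun.
Variables (R : realType) (K T tau : nat) (xi : R).
Variables (X : nat -> 'I_K -> R) (f : nat -> R -> R) (lt : nat -> R).
Variables (a g : nat -> 'I_K) (delta r : nat -> R).
Hypotheses (xi_ge0 : 0 <= xi) (tau_gt0 : (0 < tau)%N).
Hypothesis f0 : forall t, (1 <= t <= T)%N -> f t 0 = 0.
Hypothesis f_lip : forall t, (1 <= t <= T)%N ->
  forall x y, `|f t x - f t y| <= lt t * `|x - y|.
Hypothesis run : sw_ucb_run T tau xi X f a g delta r.

(* The greedy arm's bonus is nonnegative, so the UCB inequality
   Xbar(g) + c(g) <= Xbar(a) + c(a) leaves at most c(a) for the gap. *)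
Lemma incentive_le_cbonus (t : nat) : (1 <= t <= T)%N -> (K < t)%N ->
  Xbar tau a r t (g t) - Xbar tau a r t (a t) <= cbonus tau xi a t (a t).
Proof.
move=> t_in lt_Kt; have [_ /(_ lt_Kt) [ucb _ _] _] := run t_in.
have := ucb (g t); have := sqrtr_ge0 (xi * ln (minn t tau)%:R / (Nwin tau a t (g t))%:R).
rewrite /cbonus; lra.
Qed.

Lemma drift_le_log_window (t : nat) : (1 <= t <= T)%N ->
  delta t <= lmax T lt * Num.sqrt (xi * ln (minn t tau)%:R).
Proof.
move=> t_in; have /andP[t_gt0 _] := t_in.
have bound_ge0 : 0 <= lmax T lt * Num.sqrt (xi * ln (minn t tau)%:R).
  by rewrite mulr_ge0 ?lmax_ge0 ?sqrtr_ge0.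
have [init later _] := run t_in.
case: (leqP t K) => [le_tK | lt_Kt]; first by rewrite (proj2 (init le_tK)).
have [_ greedy ->] := later lt_Kt; case: ifP => // _.
have chi_ge0 : 0 <= Xbar tau a r t (g t) - Xbar tau a r t (a t).
  by rewrite subr_ge0 greedy.
apply: le_trans (lipschitz0_le (f0 t_in) (f_lip t_in) chi_ge0) _.
apply: le_trans (ler_wpM2r chi_ge0 (le_lmax lt t_in)) _.
rewrite ler_wpM2l ?lmax_ge0 //.
apply: le_trans (incentive_le_cbonus t_in lt_Kt) _.
exact: (cbonus_le_log_window xi_ge0 tau_gt0 a (a t) t_gt0).
Qed.

End IncentivizedRun.

Theorem lemma4 (R : realType) (K T tau : nat) (xi : R)
    (X : nat -> 'I_K -> R) (f : nat -> R -> R) (lt : nat -> R)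
    (a g : nat -> 'I_K) (delta r : nat -> R) :
  (0 < K)%N -> (0 < tau)%N -> 0 < xi ->
  (forall t i, 0 <= X t i <= 1) ->
  (forall t, (1 <= t <= T)%N -> {homo f t : x y / x <= y}) ->
  (forall t, (1 <= t <= T)%N -> f t 0 = 0) ->
  (forall t, (1 <= t <= T)%N -> forall x y, `|f t x - f t y| <= lt t * `|x - y|) ->
  sw_ucb_run T tau xi X f a g delta r ->
  forall (t : nat) (i : 'I_K), (1 <= t <= T)%N ->
    Drift a delta t i
      <= lmax T lt * (Ntot a t i)%:R * Num.sqrt (xi * ln (minn t tau)%:R).
Proof.
move=> _ tau_gt0 /ltW xi_ge0 _ _ f0 f_lip run t i /andP[t_gt0 le_tT].
rewrite mulrAC mulrC; apply: ler_sum_nat_count => s /andP[s_gt0 lt_st] _.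
have s_in : (1 <= s <= T)%N by rewrite s_gt0 (leq_trans _ le_tT).
apply: le_trans (drift_le_log_window xi_ge0 tau_gt0 f0 f_lip run s_in) _.
apply: ler_wpM2l; first exact: lmax_ge0.
by apply: (log_window_homo xi_ge0 tau_gt0 s_gt0).
Qed.
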